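(* There exists a class $\mathcal{J}$ (a formula with one free variable in the language $\{e,\vdash,\circ\}$) such that $\mathsf{Seq}\vdash\phi^{\mathcal{J}}$ for every axiom $\phi$ of $\mathsf{Seq}^*$. Furthermore, writing $x\preceq y$ for $\exists z\in\mathcal{J}\,[y=x\circ z]$, the theory $\mathsf{Seq}$ proves that $\preceq$ is reflexive and transitive, that $\forall y\in\mathcal{J}\,\forall x\,[x\preceq y\rightarrow x\in\mathcal{J}]$, and that $\forall w\,[e\vdash w\in\mathcal{J}]$.
   Context: $\mathsf{Seq}$ is the theory in the language $\{e,\vdash,\circ\}$ ($e$ constant, $\vdash$ and $\circ$ binary functions) with axioms: ($\mathsf{Seq}_1$) $\forall xy[x\vdash y\neq e]$; ($\mathsf{Seq}_2$) $\forall x_1x_2y_1y_2[x_1\vdash x_2=y_1\vdash y_2\rightarrow(x_1=y_1\wedge x_2=y_2)]$; ($\mathsf{Seq}_3$) $\forall x[x\circ e=x]$; ($\mathsf{Seq}_4$) $\forall xyz[x\circ(y\vdash z)=(x\circ y)\vdash z]$; ($\mathsf{Seq}_5$) $\forall x[x=e\vee\exists yz[x=y\vdash z]]$. $\mathsf{Seq}^*$ is the theory with axioms $\mathsf{Seq}_1$, $\mathsf{Seq}_2$, $\mathsf{Seq}_4$ and ($\mathsf{Seq}^*_3$) $\forall x[x\circ e=x\wedge e\circ x=x]$, ($\mathsf{Seq}^*_5$) $\forall xyzw[x\circ y=z\circ w\leftrightarrow\exists u[(z=x\circ u\wedge u\circ w=y)\vee(x=z\circ u\wedge u\circ y=w)]]$.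 For a class $K$ and formula $\phi$, the relativization $\phi^K$ is defined by: $\phi^K=\phi$ for atomic $\phi$, commuting with propositional connectives, $(\forall x\phi)^K=\forall x[K(x)\rightarrow\phi^K]$, $(\exists x\phi)^K=\exists x[K(x)\wedge\phi^K]$. $x\in K$ means $K(x)$. *)

From Stdlib Require Import Arith.

Inductive term : Type :=
| tvar : nat -> term
| te : term
| tturn : term -> term -> term
| tcirc : term -> term -> term.

Inductive form : Type :=
| feq : term -> term -> form
| ffalse : form
| fneg : form -> form
| fand : form -> form -> form
| f_or : form -> form -> form
| fimp : form -> form -> form
| fiff : form -> form -> form
| fall : form -> form   (* binds de Bruijn variable 0 *)
| fex : form -> form.

Record structure : Type := {
  dom : Type;
  ie : dom;
  iturn : dom -> dom -> dom;
  icirc : dom -> dom -> dom }.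

Definition scons {A : Type} (a : A) (rho : nat -> A) : nat -> A :=
  fun n => match n with 0 => a | S k => rho k end.

Fixpoint eval (M : structure) (rho : nat -> dom M) (t : term) : dom M :=
  match t with
  | tvar n => rho n
  | te => ie M
  | tturn a b => iturn M (eval M rho a) (eval M rho b)
  | tcirc a b => icirc M (eval M rho a) (eval M rho b)
  end.

Fixpoint sat (M : structure) (rho : nat -> dom M) (f : form) : Prop :=
  match f with
  | feq a b => eval M rho a = eval M rho b
  | ffalse => False
  | fneg g => ~ sat M rho g
  | fand g h => sat M rho g /\ sat M rho h
  | f_or g h => sat M rho g \/ sat M rho h
  | fimp g h => sat M rho g -> sat M rho h
  | fiff g h => (sat M rho g <-> sat M rho h)
  | fall g => forall d : dom M, sat M (scons d rho) g
  | fex g => exists d : dom M, sat M (scons d rho) g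
  end.

Fixpoint tbounded (n : nat) (t : term) : Prop :=
  match t with
  | tvar k => k < n
  | te => True
  | tturn a b | tcirc a b => tbounded n a /\ tbounded n b
  end.

Fixpoint fbounded (n : nat) (f : form) : Prop :=
  match f with
  | feq a b => tbounded n a /\ tbounded n b
  | ffalse => True
  | fneg g => fbounded n g
  | fand g h | f_or g h | fimp g h | fiff g h => fbounded n g /\ fbounded n h
  | fall g | fex g => fbounded (S n) g
  end.

(* Relativization phi^K to a class K, i.e. a formula whose only free variable
   is de Bruijn 0. Under a new binder the bound variable is index 0, so K is
   inserted unchanged. *)
Fixpoint rel (K : form) (f : form) : form :=
  match f with
  | feq a b => feq a b
  | ffalse => ffalse
  | fneg g => fneg (rel K g)
  | fand g h => fand (rel K g) (rel K h)
  | f_or g h => f_or (rel K g) (rel K h)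
  | fimp g h => fimp (rel K g) (rel K h)
  | fiff g h => fiff (rel K g) (rel K h)
  | fall g => fall (fimp K (rel K g))
  | fex g => fex (fand K (rel K g))
  end.

Notation v := tvar.

Definition Seq1 : form := fall (fall (fneg (feq (tturn (v 1) (v 0)) te))).
Definition Seq2 : form :=
  fall (fall (fall (fall
    (fimp (feq (tturn (v 3) (v 2)) (tturn (v 1) (v 0)))
          (fand (feq (v 3) (v 1)) (feq (v 2) (v 0))))))).
Definition Seq3 : form := fall (feq (tcirc (v 0) te) (v 0)).
Definition Seq4 : form :=
  fall (fall (fall
    (feq (tcirc (v 2) (tturn (v 1) (v 0))) (tturn (tcirc (v 2) (v 1)) (v 0))))).
Definition Seq5 : form :=
  fall (f_or (feq (v 0) te) (fex (fex (feq (v 2) (tturn (v 1) (v 0)))))).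

Definition Seq3s : form :=
  fall (fand (feq (tcirc (v 0) te) (v 0)) (feq (tcirc te (v 0)) (v 0))).
(* forall x y z w [x o y = z o w <-> exists u [(z = x o u /\ u o w = y)
                                               \/ (x = z o u /\ u o y = w)]] *)
Definition Seq5s : form :=
  fall (fall (fall (fall
    (fiff (feq (tcirc (v 3) (v 2)) (tcirc (v 1) (v 0)))
          (fex (f_or
             (fand (feq (v 2) (tcirc (v 4) (v 0))) (feq (tcirc (v 0) (v 1)) (v 3)))
             (fand (feq (v 4) (tcirc (v 2) (v 0))) (feq (tcirc (v 0) (v 3)) (v 1))))))))).

Definition Seq_axiom (phi : form) : Prop :=
  phi = Seq1 \/ phi = Seq2 \/ phi = Seq3 \/ phi = Seq4 \/ phi = Seq5.

Definition SeqStar_axiom (phi : form) : Prop :=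
  phi = Seq1 \/ phi = Seq2 \/ phi = Seq3s \/ phi = Seq4 \/ phi = Seq5s.

Definition model_of (T : form -> Prop) (M : structure) : Prop :=
  forall phi, T phi -> forall rho : nat -> dom M, sat M rho phi.

(* T |- phi, read semantically (equivalent by Goedel's completeness theorem):
   phi holds in every model of T under every assignment. *)
Definition proves (T : form -> Prop) (phi : form) : Prop :=
  forall M : structure, model_of T M -> forall rho : nat -> dom M, sat M rho phi.

Definition inK (M : structure) (K : form) (x : dom M) : Prop :=
  sat M (scons x (fun _ => x)) K.

Definition preceq (M : structure) (K : form) (x y : dom M) : Prop :=
  exists z, inK M K z /\ y = icirc M x z.

From Stdlib Require Import Setoid.

(** Call [w] Seq*-regular when [e ∘ w = w], [∘] associates with [w] on the
    right, and the decomposition axiom Seq*5 holds with [w] as last factor.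
    The class [J] is cut out of the regular elements by two rounds of
    shortening: first keep the [w] such that right multiplication by [w]
    preserves regularity, then keep those of them whose left factors [u]
    (with [u ∘ w] kept) are kept as well.  Seq proves that [e] is regular and
    that regularity passes from [w] to [w ⊢ a] and back (Seq2, Seq4, Seq5
    peel off the last element), so [J] contains [e], is closed under [⊢] and
    [∘], and contains every left factor of its elements.  In [J] the axioms of
    Seq* then hold relativized, the witness of Seq*5 being a left factor. *)

Fixpoint tlift (t : term) : term :=
  match t with
  | tvar n => tvar (S n)
  | te => te
  | tturn a b => tturn (tlift a) (tlift b)
  | tcirc a b => tcirc (tlift a) (tlift b)
  end.

Lemma eval_tlift (M : structure) (rho : nat -> dom M) (d : dom M) (t : term) :
  eval M (scons d rho) (tlift t) = eval M rho t.
Proof. induction t; cbn; congruence. Qed.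

Definition seqstar_regular_form (t : term) : form :=
  let t2 := tlift (tlift t) in
  let t3 := tlift t2 in
  let t4 := tlift t3 in
  fand (feq (tcirc te t) t)
    (fand (fall (fall (feq (tcirc (tcirc (v 1) (v 0)) t2) (tcirc (v 1) (tcirc (v 0) t2)))))
       (fall (fall (fall (fimp (feq (tcirc (v 2) (v 1)) (tcirc (v 0) t3))
          (fex (f_or
             (fand (feq (v 1) (tcirc (v 3) (v 0))) (feq (tcirc (v 0) t4) (v 2)))
             (fand (feq (v 3) (tcirc (v 1) (v 0))) (feq (tcirc (v 0) (v 2)) t4))))))))).

Definition seqstar_stable_form (t : term) : form :=
  fand (seqstar_regular_form t)
    (fall (fimp (seqstar_regular_form (v 0))
                (seqstar_regular_form (tcirc (v 0) (tlift t))))).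

Definition J_form (t : term) : form :=
  fand (seqstar_stable_form t)
    (fall (fimp (seqstar_stable_form (tcirc (v 0) (tlift t)))
                (seqstar_stable_form (v 0)))).

Definition J : form := J_form (v 0).

Lemma J_bounded : fbounded 1 J.
Proof. cbn; repeat split; repeat constructor. Qed.

Section Semantics.

Variable M : structure.

Local Notation e := (ie M).
Local Infix "⊢" := (iturn M) (at level 40, left associativity).
Local Infix "∘" := (icirc M) (at level 40, left associativity).

Definition seqstar_regular (w : dom M) : Prop :=
  e ∘ w = w /\
  (forall x y, x ∘ y ∘ w = x ∘ (y ∘ w)) /\
  (forall x y z, x ∘ y = z ∘ w ->
     exists u, (z = x ∘ u /\ u ∘ w = y) \/ (x = z ∘ u /\ u ∘ y = w)).

Definition seqstar_stable (w : dom M) : Prop :=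
  seqstar_regular w /\ forall x, seqstar_regular x -> seqstar_regular (x ∘ w).

Definition in_J (w : dom M) : Prop :=
  seqstar_stable w /\ forall u, seqstar_stable (u ∘ w) -> seqstar_stable u.

Lemma sat_seqstar_regular_form rho t :
  sat M rho (seqstar_regular_form t) <-> seqstar_regular (eval M rho t).
Proof. cbn. repeat setoid_rewrite eval_tlift. reflexivity. Qed.

Lemma sat_seqstar_stable_form rho t :
  sat M rho (seqstar_stable_form t) <-> seqstar_stable (eval M rho t).
Proof.
  cbn [seqstar_stable_form sat]. setoid_rewrite sat_seqstar_regular_form.
  cbn. setoid_rewrite eval_tlift. reflexivity.
Qed.

Lemma sat_J_form rho t : sat M rho (J_form t) <-> in_J (eval M rho t).
Proof.
  cbn [J_form sat]. setoid_rewrite sat_seqstar_stable_form.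
  cbn. setoid_rewrite eval_tlift. reflexivity.
Qed.

Lemma sat_J d rho : sat M (scons d rho) J <-> in_J d.
Proof. apply sat_J_form. Qed.

Lemma inK_J x : inK M J x <-> in_J x.
Proof. apply sat_J. Qed.

Lemma preceq_J x y : preceq M J x y <-> exists z, in_J z /\ y = x ∘ z.
Proof. unfold preceq. setoid_rewrite inK_J. reflexivity. Qed.

Hypothesis HM : model_of Seq_axiom M.

Lemma seq1 x y : x ⊢ y <> e.
Proof. exact (HM Seq1 ltac:(red; tauto) (fun _ => e) x y). Qed.

Lemma seq2 x1 x2 y1 y2 : x1 ⊢ x2 = y1 ⊢ y2 -> x1 = y1 /\ x2 = y2.
Proof. exact (HM Seq2 ltac:(red; tauto) (fun _ => e) x1 x2 y1 y2). Qed.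

Lemma seq3 x : x ∘ e = x.
Proof. exact (HM Seq3 ltac:(red; tauto) (fun _ => e) x). Qed.

Lemma seq4 x y z : x ∘ (y ⊢ z) = x ∘ y ⊢ z.
Proof. exact (HM Seq4 ltac:(red; tauto) (fun _ => e) x y z). Qed.

Lemma seq5 x : x = e \/ exists y z, x = y ⊢ z.
Proof. exact (HM Seq5 ltac:(red; tauto) (fun _ => e) x). Qed.

Lemma seqstar_regular_e : seqstar_regular e.
Proof.
  split; [|split].
  - apply seq3.
  - intros x y; rewrite !seq3; reflexivity.
  - intros x y z Hxy. rewrite seq3 in Hxy. exists y. left. split; [auto | apply seq3].
Qed.

Lemma seqstar_regular_turn w a : seqstar_regular w -> seqstar_regular (w ⊢ a).
Proof.
  intros (Hunit & Hassoc & Hsplit). split; [|split].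
  - rewrite seq4, Hunit; reflexivity.
  - intros x y; rewrite !seq4, Hassoc; reflexivity.
  - intros x y z Hxy. destruct (seq5 y) as [-> | (y' & b & ->)].
    + exists (w ⊢ a). right. rewrite seq3 in Hxy. split; [exact Hxy | apply seq3].
    + rewrite !seq4 in Hxy. apply seq2 in Hxy as [Hxy ->].
      destruct (Hsplit _ _ _ Hxy) as [u [[Hz Hy] | [Hx Hw]]]; exists u.
      * left. rewrite seq4, Hy. auto.
      * right. rewrite seq4, Hw. auto.
Qed.

Lemma seqstar_regular_turn_inv w a : seqstar_regular (w ⊢ a) -> seqstar_regular w.
Proof.
  intros (Hunit & Hassoc & Hsplit). split; [|split].
  - rewrite seq4 in Hunit. apply seq2 in Hunit. tauto.
  - intros x y. specialize (Hassoc x y). rewrite !seq4 in Hassoc.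
    apply seq2 in Hassoc. tauto.
  - intros x y z Hxy.
    assert (Hxya : x ∘ (y ⊢ a) = z ∘ (w ⊢ a)) by (rewrite !seq4, Hxy; reflexivity).
    destruct (Hsplit _ _ _ Hxya) as [u [[Hz Hu] | [Hx Hu]]]; exists u;
      rewrite seq4 in Hu; apply seq2 in Hu as [Hu _]; auto.
Qed.

Lemma seqstar_regular_assoc w x y : seqstar_regular w -> x ∘ y ∘ w = x ∘ (y ∘ w).
Proof. intros (_ & Hassoc & _). apply Hassoc. Qed.

Lemma seqstar_stable_e : seqstar_stable e.
Proof. split; [apply seqstar_regular_e | intros x; rewrite seq3; auto]. Qed.

Lemma seqstar_stable_turn w a : seqstar_stable w -> seqstar_stable (w ⊢ a).
Proof.
  intros [Hw Hmul]. split; [now apply seqstar_regular_turn |].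
  intros x Hx. rewrite seq4. apply seqstar_regular_turn; auto.
Qed.

Lemma seqstar_stable_turn_inv w a : seqstar_stable (w ⊢ a) -> seqstar_stable w.
Proof.
  intros [Hw Hmul]. split; [now apply seqstar_regular_turn_inv in Hw |].
  intros x Hx. specialize (Hmul x Hx). rewrite seq4 in Hmul.
  now apply seqstar_regular_turn_inv in Hmul.
Qed.

Lemma seqstar_stable_circ v w : seqstar_stable v -> seqstar_stable w -> seqstar_stable (v ∘ w).
Proof.
  intros [Hv Hvmul] [Hw Hwmul]. split; [auto |].
  intros x Hx. rewrite <- seqstar_regular_assoc by exact Hw. auto.
Qed.

Lemma in_J_regular w : in_J w -> seqstar_regular w.
Proof. intros [[Hw _] _]; exact Hw. Qed.

Lemma in_J_e : in_J e.
Proof. split; [apply seqstar_stable_e | intros u; rewrite seq3; auto]. Qed.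

Lemma in_J_turn w a : in_J w -> in_J (w ⊢ a).
Proof.
  intros [Hw Hfactor]. split; [now apply seqstar_stable_turn |].
  intros u Hu. rewrite seq4 in Hu. apply seqstar_stable_turn_inv in Hu. auto.
Qed.

Lemma in_J_circ v w : in_J v -> in_J w -> in_J (v ∘ w).
Proof.
  intros [Hv Hvfactor] [Hw Hwfactor]. split; [now apply seqstar_stable_circ |].
  intros u Hu. rewrite <- seqstar_regular_assoc in Hu by apply Hw. auto.
Qed.

Lemma in_J_left_factor x w : in_J (x ∘ w) -> in_J w -> in_J x.
Proof.
  intros [Hxw Hxwfactor] [Hw Hwfactor]. split; [auto |].
  intros u Hu. apply Hxwfactor.
  rewrite <- seqstar_regular_assoc by apply Hw. now apply seqstar_stable_circ.
Qed.

Lemma in_J_split x y z w : in_J y -> in_J w ->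
  (x ∘ y = z ∘ w <->
   exists u, in_J u /\ ((z = x ∘ u /\ u ∘ w = y) \/ (x = z ∘ u /\ u ∘ y = w))).
Proof.
  intros Hy Hw. split.
  - intros Hxy. destruct (in_J_regular _ Hw) as (_ & _ & Hsplit).
    destruct (Hsplit _ _ _ Hxy) as [u [[Hz Hu] | [Hx Hu]]];
      exists u; split; auto.
    + apply (in_J_left_factor u w); congruence.
    + apply (in_J_left_factor u y); congruence.
  - intros (u & _ & [[-> <-] | [-> <-]]).
    + symmetry. apply seqstar_regular_assoc, in_J_regular, Hw.
    + apply seqstar_regular_assoc, in_J_regular, Hy.
Qed.

End Semantics.

Lemma rel_J_SeqStar_axiom phi : SeqStar_axiom phi -> proves Seq_axiom (rel J phi).
Proof.
  intros Hphi M HM rho.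
  destruct Hphi as [-> | [-> | [-> | [-> | ->]]]]; cbn [Seq1 Seq2 Seq3s Seq4 Seq5s rel sat eval scons];
    repeat setoid_rewrite sat_J.
  - intros; apply seq1, HM.
  - intros; apply seq2; auto.
  - intros x Hx. split; [apply seq3, HM | apply in_J_regular, Hx].
  - intros; apply seq4, HM.
  - intros x _ y Hy z _ w Hw. apply in_J_split; auto.
Qed.

Theorem lemma5 :
  exists J : form,
    fbounded 1 J /\
    (forall phi, SeqStar_axiom phi -> proves Seq_axiom (rel J phi)) /\
    (forall M : structure, model_of Seq_axiom M ->
       (forall x : dom M, preceq M J x x) /\
       (forall x y z : dom M, preceq M J x y -> preceq M J y z -> preceq M J x z) /\
       (forall y : dom M, inK M J y -> forall x : dom M, preceq M J x y -> inK M J x) /\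
       (forall w : dom M, inK M J (iturn M (ie M) w))).
Proof.
  exists J. split; [exact J_bounded | split; [exact rel_J_SeqStar_axiom |]].
  intros M HM. setoid_rewrite preceq_J. setoid_rewrite inK_J.
  split; [| split; [| split]].
  - intros x. exists (ie M). split; [apply in_J_e, HM | symmetry; apply seq3, HM].
  - intros x y z (u & Hu & ->) (u' & Hu' & ->). exists (icirc M u u').
    split; [now apply in_J_circ |].
    apply seqstar_regular_assoc, in_J_regular, Hu'.
  - intros y Hy x (u & Hu & ->). now apply in_J_left_factor with u.
  - intros w. apply in_J_turn, in_J_e; exact HM.
Qed.
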